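(* For integers $g\ge 0$ and $h,m\ge 1$, let $S^0_{gh}(K_m)$ be the graph obtained from the complete graph $K_m$ by attaching, at one vertex $u$, two pendant paths of lengths $g$ and $h$ that are disjoint except at $u$. Then \[ X_{S_{gh}^0(K_m)}=(m-1)!\Bigg(\sum_{z=0}^{m-1}e_z\,X_{P_{g+h+m-z}}-\sum_{z=1}^{m-1}\frac{X_{K_z^h}}{(z-1)!}\,X_{P_{g+m-z}}\Bigg). \]
   Context: All graphs are finite simple graphs. The chromatic symmetric function of a graph $G$ is $X_G=\sum_{\kappa}\prod_{v\in V(G)}x_{\kappa(v)}$, where $\kappa$ ranges over proper colorings $\kappa:V(G)\to\{1,2,\dots\}$; $e_z$ is the $z$-th elementary symmetric function, $e_0=1$. $P_j$ is the path on $j$ vertices. $K_z^h$ is the lollipop: the complete graph $K_z$ with a pendant path of length $h$ (with $h$ new vertices) attached at one vertex. *)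

From HB Require Import structures.
From mathcomp Require Import all_boot all_order all_algebra.
From mathcomp Require Import mpoly.
Set Implicit Arguments. Unset Strict Implicit. Unset Printing Implicit Defensive.
Import GRing.Theory.
Local Open Scope ring_scope.

(* A simple graph on a finite vertex type T is given by an adjacency relation.
   Symmetrization of an "i < j"-oriented edge description. *)
Definition symrel (T : eqType) (r : rel T) : rel T := fun x y => r x y || r y x.

Definition proper (T : finType) (e : rel T) (n : nat) (k : {ffun T -> 'I_n}) : bool :=
  [forall x, forall y, e x y ==> (k x != k y)].

(* Chromatic symmetric function X_G, in the n variables x_0,...,x_{n-1}
   (i.e. its image under x_i = 0 for i >= n), with rational coefficients. *)
Definition chromsym (n : nat) (T : finType) (e : rel T) : {mpoly rat[n]} :=
  \sum_(k : {ffun T -> 'I_n} | proper e k) \prod_(v : T) 'X_(k v).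

Definition path_adj (j : nat) : rel 'I_j :=
  symrel (fun a b : 'I_j => (val b == (val a).+1)).

(* Lollipop K_z^h on vertices 0..z+h-1: clique on 0..z-1, pendant path
   z-1, z, ..., z+h-1 (h new vertices). *)
Definition lollipop_adj (z h : nat) : rel 'I_(z + h) :=
  symrel (fun a b : 'I_(z + h) =>
    ((val a < val b) && (val b < z))%N ||
    ((val b == (val a).+1) && (z <= val b))%N).

(* S^0_{gh}(K_m) on vertices 0..m+h+g-1: clique on 0..m-1, u = m-1,
   pendant path of length h: u, m, ..., m+h-1,
   pendant path of length g: u, m+h, ..., m+h+g-1. *)
Definition spider_adj (g h m : nat) : rel 'I_(m + h + g) :=
  symrel (fun a b : 'I_(m + h + g) =>
    ((val a < val b) && (val b < m))%N ||
    ((val b == (val a).+1) && (m <= val b) && (val b < m + h))%N ||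
    ((val a == m.-1) && (val b == m + h))%N ||
    ((val b == (val a).+1) && (m + h <= val a))%N).

Definition XP (n j : nat) : {mpoly rat[n]} := chromsym n (@path_adj j).
Definition XK (n z h : nat) : {mpoly rat[n]} := chromsym n (@lollipop_adj z h).
Definition XS (n g h m : nat) : {mpoly rat[n]} := chromsym n (@spider_adj g h m).

(* A proper colouring of S^0_{gh}(K_m) is an injective colouring of K_m together
   with proper colourings of the two pendant paths whose first vertex avoids the
   colour c of the attachment vertex u.  Write D_j(c) (Xpendant j c) for the sum of
   the monomials of the colourings of a path of j vertices hanging from a vertex
   of colour c, and E_k(c) (mesym_skip k c) for the k-th elementary symmetric
   polynomial in the variables other than x_c.  Counting injective colourings gives
   X_S = (m-1)! sum_c x_c E_{m-1}(c) D_h(c) D_g(c) and likewise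
   X_{K_z^h} = (z-1)! sum_c x_c E_{z-1}(c) D_h(c).  The recurrences
   e_{k+1} = E_{k+1}(c) + x_c E_k(c) and D_{j+1}(c) = X_{P_{j+1}} - x_c D_j(c)
   expand D_g(c) E_k(c) into terms e_z D_{g+k-z}(c) and E_z(c) X_{P_{g+k-z}}, and
   sum_c x_c D_a(c) D_b(c) = X_{P_{a+b+1}}, two pendant paths glued at a vertex
   forming a path. *)

From Pilot Require Import Defs.
From HB Require Import structures.
From mathcomp Require Import all_boot all_order all_algebra.
From mathcomp Require Import mpoly.
From mathcomp Require Import zify ring.
Set Implicit Arguments. Unset Strict Implicit. Unset Printing Implicit Defensive.
Import GRing.Theory.
Local Open Scope ring_scope.

(* Otherwise fintype's [proper] (strict inclusion) shadows the colouring predicate. *)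
Local Notation proper := Defs.proper.

Section FunJoin.
Variable C : Type.

Definition fjoin a b (f1 : {ffun 'I_a -> C}) (f2 : {ffun 'I_b -> C}) :
    {ffun 'I_(a + b) -> C} :=
  [ffun i => match split i with inl j => f1 j | inr k => f2 k end].

Lemma fjoin_lshift a b (f1 : {ffun 'I_a -> C}) (f2 : {ffun 'I_b -> C}) i :
  fjoin f1 f2 (lshift b i) = f1 i.
Proof. by rewrite ffunE (unsplitK (inl _ i)). Qed.

Lemma fjoin_rshift a b (f1 : {ffun 'I_a -> C}) (f2 : {ffun 'I_b -> C}) j :
  fjoin f1 f2 (rshift a j) = f2 j.
Proof. by rewrite ffunE (unsplitK (inr _ j)). Qed.

Lemma fjoin_split a b (f : {ffun 'I_(a + b) -> C}) :
  fjoin [ffun i => f (lshift b i)] [ffun j => f (rshift a j)] = f.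
Proof.
apply/ffunP => x; rewrite ffunE.
by case: splitP => [i|j] /= Ex; rewrite ffunE; congr (f _); apply: val_inj.
Qed.

End FunJoin.

Lemma sum_fjoin (R : nmodType) (C : finType) a b (F : {ffun 'I_(a + b) -> C} -> R) :
  \sum_f F f = \sum_(f1 : {ffun 'I_a -> C}) \sum_(f2 : {ffun 'I_b -> C}) F (fjoin f1 f2).
Proof.
rewrite pair_big (reindex (fun p => fjoin p.1 p.2)) //=.
exists (fun f => ([ffun i => f (lshift b i)], [ffun j => f (rshift a j)])).
  by move=> [f1 f2] _; congr (_, _); apply/ffunP => i;
    rewrite ffunE ?fjoin_lshift ?fjoin_rshift.
by move=> f _; apply: fjoin_split.
Qed.

Lemma sum_ffun1 (R : nmodType) (C : finType) (F : {ffun 'I_1 -> C} -> R) :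
  \sum_f F f = \sum_c F [ffun _ => c].
Proof.
rewrite (reindex (fun c => [ffun _ => c])) //=.
exists (fun f => f ord0) => [c _|f _]; first by rewrite ffunE.
by apply/ffunP => i; rewrite ffunE [i]ord1.
Qed.

Lemma forall_split a b (P : pred 'I_(a + b)) :
  [forall x, P x] = [forall i, P (lshift b i)] && [forall j, P (rshift a j)].
Proof.
apply/forallP/andP => [H | [/forallP H1 /forallP H2] x].
  by split; apply/forallP.
by case: (splitP x) => [i|j] Ex; [move: (H1 i) | move: (H2 j)];
  congr P; apply: val_inj.
Qed.

Lemma forall_andb (T : finType) (P Q : pred T) :
  [forall x, P x && Q x] = [forall x, P x] && [forall x, Q x].
Proof.
apply/forallP/andP => [H | [/forallP H1 /forallP H2] x]; last by rewrite H1 H2.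
by split; apply/forallP => x; case/andP: (H x).
Qed.

Ltac ord_lia := let i := fresh in let j := fresh in
  move=> i j /=; move: (ltn_ord i) (ltn_ord j); lia.

Section Colorings.
Variable n : nat.

Lemma eq_proper (T : finType) (r r' : rel T) (k : {ffun T -> 'I_n}) :
  r =2 r' -> proper r k = proper r' k.
Proof. by move=> E; apply: eq_forallb => x; apply: eq_forallb => y; rewrite E. Qed.

Lemma proper_symrel (T : finType) (r : rel T) (k : {ffun T -> 'I_n}) :
  proper (symrel r) k = proper r k.
Proof.
apply/forallP/forallP => H x; apply/forallP => y; apply/implyP => rxy.
  by move/forallP/(_ y)/implyP: (H x); apply; rewrite /symrel rxy.
case/orP: rxy => rxy; first by move/forallP/(_ y)/implyP: (H x); apply.
by move/forallP/(_ x)/implyP/(_ rxy): (H y); rewrite eq_sym.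
Qed.

Lemma proper_fjoin a b (r : rel 'I_(a + b)) (f1 : {ffun 'I_a -> 'I_n})
    (f2 : {ffun 'I_b -> 'I_n}) :
  proper r (fjoin f1 f2) =
  [&& proper (fun i j => r (lshift b i) (lshift b j)) f1,
      [forall i, forall j, r (lshift b i) (rshift a j) ==> (f1 i != f2 j)],
      [forall j, forall i, r (rshift a j) (lshift b i) ==> (f2 j != f1 i)] &
      proper (fun i j => r (rshift a i) (rshift a j)) f2].
Proof.
rewrite /proper forall_split; under eq_forallb do rewrite forall_split.
under [X in _ && X]eq_forallb do rewrite forall_split.
rewrite !forall_andb -andbA; congr [&& _, _, _ & _];
  by do 2 apply: eq_forallb => ?; rewrite ?fjoin_lshift ?fjoin_rshift.
Qed.

Lemma proper_ltn_injective k (f : {ffun 'I_k -> 'I_n}) :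
  proper (fun i j : 'I_k => (i < j)%N) f = injectiveb f.
Proof.
rewrite -proper_symrel; apply/forallP/injectiveP => [H x y Exy | inj x].
  apply/eqP; apply: contraT => nxy.
  move/forallP/(_ y)/implyP: (H x).
  by rewrite /symrel -neq_ltn nxy Exy eqxx => /(_ isT).
apply/forallP => y; apply/implyP; rewrite /symrel -neq_ltn.
by apply: contra => /eqP /inj ->.
Qed.

Definition Xcol (T : finType) (k : {ffun T -> 'I_n}) : {mpoly rat[n]} :=
  \prod_v 'X_(k v).

Lemma Xcol_fjoin a b (f1 : {ffun 'I_a -> 'I_n}) (f2 : {ffun 'I_b -> 'I_n}) :
  Xcol (fjoin f1 f2) = Xcol f1 * Xcol f2.
Proof.
by rewrite /Xcol big_split_ord; congr (_ * _); apply: eq_bigr => i _;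
  rewrite ?fjoin_lshift ?fjoin_rshift.
Qed.

Lemma Xcol_const1 (d : 'I_n) : Xcol [ffun _ : 'I_1 => d] = 'X_d.
Proof. by rewrite /Xcol big_ord1 ffunE. Qed.

Definition pendant_proper h (c : 'I_n) (f : {ffun 'I_h -> 'I_n}) : bool :=
  proper (@path_adj h) f && [forall j : 'I_h, (val j == 0)%N ==> (f j != c)].

Definition Xpendant h (c : 'I_n) : {mpoly rat[n]} :=
  \sum_(f : {ffun 'I_h -> 'I_n} | pendant_proper c f) Xcol f.

Section PendantPath.

(* [r] is the graph [r1] with a path on the [h] new vertices attached at [u]. *)
Variables (a h : nat) (r : rel 'I_(a + h)) (r1 : rel 'I_a) (u : 'I_a).
Hypothesis r_lshift : forall i j, r (lshift h i) (lshift h j) = r1 i j.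
Hypothesis r_cross :
  forall i j, r (lshift h i) (rshift a j) = (val i == val u) && (val j == 0)%N.
Hypothesis r_back : forall i j, r (rshift a j) (lshift h i) = false.
Hypothesis r_rshift :
  forall i j, r (rshift a i) (rshift a j) = (val j == (val i).+1)%N.

Lemma proper_pendant f1 f2 :
  proper r (fjoin f1 f2) = proper r1 f1 && pendant_proper (f1 u) f2.
Proof.
rewrite proper_fjoin (eq_proper _ r_lshift) (eq_proper _ r_rshift).
rewrite /pendant_proper /path_adj proper_symrel.
have -> : [forall j, forall i, r (rshift a j) (lshift h i) ==> (f2 j != f1 i)].
  by apply/forallP => j; apply/forallP => i; rewrite r_back.
have -> : [forall i, forall j, r (lshift h i) (rshift a j) ==> (f1 i != f2 j)] =
          [forall j, (val j == 0)%N ==> (f2 j != f1 u)].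
  apply/forallP/forallP => [H j | H i].
    by apply/implyP => j0; move/forallP/(_ j)/implyP: (H u);
      rewrite r_cross eqxx j0 eq_sym; apply.
  apply/forallP => j; rewrite r_cross; apply/implyP => /andP[/eqP iu j0].
  have -> : i = u by apply: val_inj.
  by rewrite eq_sym; move/implyP: (H j); apply.
by rewrite /=; congr (_ && _); apply: andbC.
Qed.

Lemma sum_proper_pendant (Psi : 'I_n -> {mpoly rat[n]}) :
  \sum_(f : {ffun 'I_(a + h) -> 'I_n} | proper r f) Xcol f * Psi (f (lshift h u)) =
  \sum_(f1 : {ffun 'I_a -> 'I_n} | proper r1 f1)
     Xcol f1 * Xpendant h (f1 u) * Psi (f1 u).
Proof.
rewrite big_mkcond sum_fjoin [RHS]big_mkcond; apply: eq_bigr => f1 _.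
under eq_bigr do rewrite proper_pendant fjoin_lshift Xcol_fjoin.
case: (proper r1 f1) => /=; last by rewrite big1.
by rewrite big_distrr big_distrl [RHS]big_mkcond.
Qed.

Lemma chromsym_pendant :
  chromsym n (symrel r) = \sum_(f1 | proper r1 f1) Xcol f1 * Xpendant h (f1 u).
Proof.
transitivity (\sum_(f | proper r f) Xcol f * (fun _ => 1) (f (lshift h u))).
  by apply: eq_big => [f | f _]; rewrite ?proper_symrel ?mulr1.
by rewrite (sum_proper_pendant (fun _ => 1)); apply: eq_bigr => f1 _; rewrite mulr1.
Qed.

End PendantPath.

Lemma proper_rel0 (T : finType) (k : {ffun T -> 'I_n}) : proper (fun _ _ => false) k.
Proof. by apply/forallP => x; apply/forallP. Qed.

Lemma proper_path_cons h (d : 'I_n) (f : {ffun 'I_h -> 'I_n}) :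
  proper (@path_adj (1 + h)) (fjoin [ffun _ => d] f) = pendant_proper d f.
Proof.
rewrite /path_adj proper_symrel (proper_pendant (r1 := fun _ _ => false) (u := ord0));
  [by rewrite proper_rel0 ffunE | ord_lia ..].
Qed.

Lemma pendant_proper_cons h (c d : 'I_n) (f : {ffun 'I_h -> 'I_n}) :
  pendant_proper c (fjoin [ffun _ : 'I_1 => d] f) = (d != c) && pendant_proper d f.
Proof.
rewrite {1}/pendant_proper proper_path_cons forall_split andbC.
congr (_ && _); apply/andP/idP => [[/forallP/(_ ord0) H _] | dc].
  by move: H; rewrite fjoin_lshift ffunE.
by split; apply/forallP => j; rewrite ?fjoin_lshift ?ffunE /= ?dc ?implybT.
Qed.

Lemma Xpendant0 (c : 'I_n) : Xpendant 0 c = 1.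
Proof.
rewrite /Xpendant (big_pred1 [ffun=> c]) => [|f]; first by rewrite /Xcol big_ord0.
have -> : f = [ffun=> c] by apply/ffunP => -[].
by rewrite /= eqxx; apply/andP; split; apply/forallP => -[].
Qed.

Lemma XpendantS h (c : 'I_n) :
  Xpendant h.+1 c = \sum_(d | d != c) 'X_d * Xpendant h d.
Proof.
rewrite /Xpendant -[h.+1]/(1 + h) big_mkcond (sum_fjoin (a := 1) (b := h)).
rewrite sum_ffun1 [RHS]big_mkcond; apply: eq_bigr => d _.
under eq_bigr do rewrite pendant_proper_cons Xcol_fjoin Xcol_const1.
case: (d != c); last by rewrite big1.
by rewrite big_distrr [RHS]big_mkcond.
Qed.

Lemma XP_Xpendant h : XP n h.+1 = \sum_d 'X_d * Xpendant h d.
Proof.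
rewrite /XP /chromsym -[h.+1]/(1 + h) big_mkcond (sum_fjoin (a := 1) (b := h)).
rewrite sum_ffun1; apply: eq_bigr => d _.
under eq_bigr do rewrite proper_path_cons -/(Xcol _) Xcol_fjoin Xcol_const1.
by rewrite big_distrr [RHS]big_mkcond.
Qed.

Lemma XpendantS_sub h (c : 'I_n) :
  Xpendant h.+1 c = XP n h.+1 - 'X_c * Xpendant h c.
Proof. by rewrite XpendantS XP_Xpendant [in RHS](bigD1 c) //= addrC addrK. Qed.

(* Both sides equal X_{P_{a+1}} X_{P_{b+1}} - sum_c x_c^2 D_a(c) D_b(c). *)
Lemma sum_Xpendant_shift a b :
  \sum_c 'X_c * Xpendant a.+1 c * Xpendant b c =
  \sum_c 'X_c * Xpendant a c * Xpendant b.+1 c.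
Proof.
apply/eqP; rewrite -subr_eq0 -sumrB; apply/eqP.
under eq_bigr do rewrite !XpendantS_sub.
transitivity (XP n a.+1 * (\sum_c 'X_c * Xpendant b c) -
              XP n b.+1 * (\sum_c 'X_c * Xpendant a c)).
  by rewrite !big_distrr -sumrB; apply: eq_bigr => c _ /=; ring.
by rewrite -!XP_Xpendant mulrC subrr.
Qed.

Lemma sum_Xpendant_pair a b :
  \sum_c 'X_c * Xpendant a c * Xpendant b c = XP n (a + b).+1.
Proof.
elim: a b => [|a IH] b.
  by under eq_bigr do rewrite Xpendant0 mulr1; rewrite XP_Xpendant.
by rewrite sum_Xpendant_shift IH addSn addnS.
Qed.

Definition mesym_skip k (c : 'I_n) : {mpoly rat[n]} :=
  \sum_(S : {set 'I_n} | (c \notin S) && (#|S| == k)) \prod_(i in S) 'X_i.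

Lemma mesym_skip0 (c : 'I_n) : mesym_skip 0 c = 1.
Proof.
rewrite /mesym_skip (bigD1 set0) /=; last by rewrite in_set0 cards0.
rewrite big_set0 big1 ?addr0 // => S /andP[/andP[_ /eqP/cards0_eq ->]].
by rewrite eqxx.
Qed.

Lemma mesymS_skip k (c : 'I_n) :
  mesym n rat k.+1 = mesym_skip k.+1 c + 'X_c * mesym_skip k c.
Proof.
rewrite /mesym (bigID (fun S : {set 'I_n} => c \in S)) /= addrC; congr (_ + _).
  by apply: eq_bigl => S; rewrite andbC.
rewrite /mesym_skip big_distrr (reindex_onto (fun T => c |: T) (fun S => S :\ c)) /=;
  last by move=> S /andP[_ cS]; rewrite setD1K.
apply: eq_big => [T | T /andP[_ /eqP E]].
  rewrite setU11 andbT cardsU1; case cT: (c \in T) => /=.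
    by apply/negbTE/negP => /andP[_ /eqP E]; move: cT; rewrite -E setD11.
  by rewrite add1n eqSS andbC setU1K ?cT // eqxx.
by rewrite big_setU1 //= -E setD11.
Qed.

Lemma Xcol_injective (T : finType) (f : {ffun T -> 'I_n}) :
  injective f -> Xcol f = \prod_(i in f @: setT) 'X_i.
Proof.
move=> inj; rewrite big_imset /=; last by move=> x y _ _ /inj.
by apply: eq_bigl => v; rewrite inE.
Qed.

Lemma sum_injective_avoid k (c : 'I_n) :
  \sum_(f : {ffun 'I_k -> 'I_n} | injectiveb f && [forall i, f i != c]) Xcol f =
  mesym_skip k c *+ k`!.
Proof.
rewrite /mesym_skip -sumrMnl.
rewrite (partition_big (fun f : {ffun 'I_k -> 'I_n} => f @: [set: 'I_k])
                      (fun S => (c \notin S) && (#|S| == k))) /=; last first.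
  move=> f /andP[/injectiveP inj /forallP nc]; apply/andP; split.
    by apply/imsetP => -[i _ E]; move: (nc i); rewrite -E eqxx.
  by rewrite card_imset // cardsT card_ord.
apply: eq_bigr => S /andP[cS /eqP cardS].
transitivity (\sum_(f in [set f : {ffun 'I_k -> 'I_n} in ffun_on (mem S) | injectiveb f])
                \prod_(i in S) ('X_i : {mpoly rat[n]})); last first.
  by rewrite sumr_const card_inj_ffuns_on card_ord cardS ffactnn.
apply: eq_big => [f | f /andP[/andP[/injectiveP inj _] /eqP <-]];
  last exact: Xcol_injective.
rewrite inE; apply/idP/idP => [/andP[/andP[inj _] /eqP <-] | /andP[/ffun_onP fS inj]].
  by rewrite inj andbT; apply/ffun_onP => i; apply: imset_f.
have imS : f @: setT = S.
  apply/eqP; rewrite eqEcard card_imset ?cardsT ?card_ord ?cardS ?leqnn ?andbT;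
    last exact/injectiveP.
  by apply/subsetP => _ /imsetP[i _ ->]; apply: fS.
rewrite inj imS eqxx andbT /=; apply/forallP => i.
by apply: contraNneq cS => <-; apply: fS.
Qed.

Lemma proper_ltn_snoc k (f : {ffun 'I_k -> 'I_n}) (c : 'I_n) :
  proper (fun i j : 'I_(k + 1) => (i < j)%N) (fjoin f [ffun=> c]) =
  injectiveb f && [forall i, f i != c].
Proof.
rewrite proper_fjoin -proper_ltn_injective; congr (_ && _).
apply/and3P/forallP => [[/forallP H _ _] i | H].
  by move/forallP/(_ ord0): (H i); rewrite ffunE /= addn0 ltn_ord.
split; apply/forallP => x; apply/forallP => y; rewrite ffunE; apply/implyP => /=.
- by rewrite H.
- by move: (ltn_ord y); lia.
- by move: (ltn_ord x) (ltn_ord y); lia.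
Qed.

Lemma sum_clique k (Psi : 'I_n -> {mpoly rat[n]}) :
  \sum_(f : {ffun 'I_(k + 1) -> 'I_n} | proper (fun i j : 'I_(k + 1) => (i < j)%N) f)
     Xcol f * Psi (f (rshift k ord0)) =
  (\sum_c 'X_c * mesym_skip k c * Psi c) *+ k`!.
Proof.
rewrite big_mkcond sum_fjoin; under eq_bigr do rewrite sum_ffun1.
rewrite exchange_big -sumrMnl; apply: eq_bigr => c _.
under eq_bigr do rewrite proper_ltn_snoc fjoin_rshift Xcol_fjoin Xcol_const1 ffunE.
rewrite -big_mkcond -!big_distrl /= sum_injective_avoid.
by rewrite !mulrnAl [mesym_skip k c * _]mulrC.
Qed.

Lemma XK_clique k h :
  XK n k.+1 h = (\sum_c 'X_c * mesym_skip k c * Xpendant h c) *+ k`!.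
Proof.
rewrite -[k.+1]addn1 /XK /lollipop_adj.
rewrite (chromsym_pendant (r1 := fun i j => (i < j)%N) (u := rshift k ord0));
  [exact: sum_clique | ord_lia ..].
Qed.

Lemma XS_clique g h k :
  XS n g h k.+1 =
  (\sum_c 'X_c * mesym_skip k c * (Xpendant h c * Xpendant g c)) *+ k`!.
Proof.
rewrite -[k.+1]addn1 /XS /spider_adj.
rewrite (chromsym_pendant (u := lshift h (rshift k ord0))
  (r1 := fun a b : 'I_(k + 1 + h) =>
           ((a < b < k + 1) || (val b == a.+1) && (k + 1 <= b))%N)); [| ord_lia ..].
rewrite (sum_proper_pendant (r1 := fun i j => (i < j)%N) (u := rshift k ord0));
  [| ord_lia ..].
under eq_bigr do rewrite -mulrA.
exact: (sum_clique k (fun c => Xpendant h c * Xpendant g c)).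
Qed.

Lemma Xpendant_mesym_skip g k (c : 'I_n) :
  Xpendant g c * mesym_skip k c =
  \sum_(z < k.+1) mesym n rat z * Xpendant (g + k - z) c -
  \sum_(z < k) mesym_skip z c * XP n (g + k - z).
Proof.
elim: k g => [|k IH] g.
  by rewrite mesym_skip0 big_ord1 big_ord0 mesym0E subr0 mul1r mulr1 addn0 subn0.
have skipS : mesym_skip k.+1 c = mesym n rat k.+1 - 'X_c * mesym_skip k c.
  by rewrite (mesymS_skip k c) addrK.
have XcXpendant : 'X_c * Xpendant g c = XP n g.+1 - Xpendant g.+1 c.
  by rewrite XpendantS_sub opprB addrC subrK.
rewrite skipS mulrBr mulrA [Xpendant g c * 'X_c]mulrC XcXpendant mulrBl IH.
rewrite [in RHS]big_ord_recr [in X in _ = _ - X]big_ord_recr /= addSnnS addnK.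
have -> : (g + k.+1 - k = g.+1)%N by lia.
ring.
Qed.

End Colorings.

Unset Implicit Arguments.

Theorem corollary4p7 (g h m : nat) (hh : (1 <= h)%N) (hm : (1 <= m)%N) (n : nat) :
  XS n g h m =
  ((m.-1)`!)%:R *:
    (\sum_(z < m) mesym n rat z * XP n (g + h + m - z)
     - \sum_(1 <= z < m) (((z.-1)`!)%:R^-1 : rat) *: (XK n z h * XP n (g + m - z))).
Proof.
case: m hm => [//|k] _ /=.
rewrite XS_clique -scaler_nat; congr (_ *: _).
transitivity (\sum_(c : 'I_n) 'X_c * Xpendant h c *
  (\sum_(z < k.+1) mesym n rat z * Xpendant (g + k - z) c -
   \sum_(z < k) mesym_skip z c * XP n (g + k - z))).
  by apply: eq_bigr => c _; rewrite -Xpendant_mesym_skip; ring.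
under [X in X = _]eq_bigr do
  rewrite mulrBr [_ * \sum_(z < k.+1) _]big_distrr [_ * \sum_(z < k) _]big_distrr.
rewrite sumrB; congr (_ - _); rewrite exchange_big /=.
  apply: eq_bigr => z _.
  have -> : (g + h + k.+1 - z = (h + (g + k - z)).+1)%N by move: (ltn_ord z); lia.
  by rewrite -sum_Xpendant_pair big_distrr; apply: eq_bigr => c _ /=; ring.
rewrite big_add1 /= big_mkord; apply: eq_bigr => z _.
rewrite XK_clique addnS subSS mulrnAl -scaler_nat scalerA mulVf ?scale1r; last first.
  by rewrite Num.Theory.pnatr_eq0 -lt0n fact_gt0.
by rewrite big_distrl; apply: eq_bigr => c _ /=; ring.
Qed.
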